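(* There exists a constant $c>0$ such that for infinitely many integers $r\ge1$, there is a $1$-gap planar graph $G$ with radius at most $r$ and treewidth $\mathrm{tw}(G)\ge 2^{cr}$.
   Context: Graphs are finite, simple, undirected. An embedded graph has vertices as distinct points of $\mathbb{R}^2$ and each edge $uv$ as a curve with endpoints $u,v$ containing no vertex in its interior; a crossing is a point common to two edges other than their endpoints. An embedded graph is $k$-gap planar if every crossing can be charged to one of the two edges involved so that at most $k$ crossings are charged to each edge; a graph is $k$-gap planar if it is isomorphic to a $k$-gap planar embedded graph. *)

From Stdlib Require Import Reals List.
From mathcomp Require Import all_boot.
Set Implicit Arguments.
Unset Strict Implicit.
Unset Printing Implicit Defensive.

Definition point := (R * R)%type.

Definition simple_graph (T : finType) (e : rel T) : Prop :=
  symmetric e /\ irreflexive e.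

(* The curve of uv is parametrised by [0,1]; curve v u is the
   reversed curve of curve u v, so each (unordered) edge has one curve. *)
Definition embedding (T : finType) (e : rel T) (pos : T -> point)
    (curve : T -> T -> R -> point) : Prop :=
  injective pos /\
  (forall u v, e u v ->
     continuity (fun t => fst (curve u v t)) /\
     continuity (fun t => snd (curve u v t)) /\
     curve u v R0 = pos u /\ curve u v R1 = pos v /\
     (forall t, curve u v t = curve v u (Rminus R1 t)) /\
     (forall t w, Rlt R0 t /\ Rlt t R1 -> curve u v t <> pos w)).

Definition on_edge (T : finType) (curve : T -> T -> R -> point) (u v : T) (p : point) : Prop :=
  exists t, Rle R0 t /\ Rle t R1 /\ curve u v t = p.

Definition crossing (T : finType) (e : rel T) (pos : T -> point)
    (curve : T -> T -> R -> point) (p : point) (u v x y : T) : Prop :=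
  e u v /\ e x y /\ [set u; v] <> [set x; y] /\
  on_edge curve u v p /\ on_edge curve x y p /\
  p <> pos u /\ p <> pos v /\ p <> pos x /\ p <> pos y.

(* k-gap planar embedded graph: every crossing (a point p together with the
   unordered pair of edges involved) is charged to one of its two edges, and
   every edge receives at most k charges. chg E lists the crossings charged to
   the edge E (each recorded as the crossing point and the other edge). *)
Definition gap_planar_embedding (T : finType) (e : rel T) (k : nat)
    (pos : T -> point) (curve : T -> T -> R -> point) : Prop :=
  exists chg : {set T} -> seq (point * {set T}),
    (forall E, size (chg E) <= k) /\
    (forall p u v x y, crossing e pos curve p u v x y ->
       List.In (p, [set x; y]) (chg [set u; v]) \/
       List.In (p, [set u; v]) (chg [set x; y])).

Definition gap_planar (T : finType) (e : rel T) (k : nat) : Prop :=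
  exists pos curve, embedding e pos curve /\ gap_planar_embedding e k pos curve.

Definition radius_le (T : finType) (e : rel T) (r : nat) : Prop :=
  exists c : T, forall w : T, exists p : seq T,
    size p <= r /\ path e c p /\ last c p = w.

Definition tree (I : finType) (t : rel I) : Prop :=
  simple_graph t /\ 0 < #|I| /\
  (forall i j : I, connect t i j) /\
  (forall (x : I) (p : seq I),
     ~ (2 <= size p /\ uniq (x :: p) /\ path t x p /\ t (last x p) x)).

Definition tree_decomposition (T I : finType) (e : rel T) (t : rel I)
    (B : I -> {set T}) : Prop :=
  tree t /\
  (forall v : T, exists i, v \in B i) /\
  (forall u v : T, e u v -> exists i, (u \in B i) && (v \in B i)) /\
  (forall v : T, forall i j : I, v \in B i -> v \in B j ->
     connect [rel a b | [&& t a b, v \in B a & v \in B b]] i j).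

Definition width (T I : finType) (B : I -> {set T}) : nat :=
  (\max_(i : I) #|B i|).-1.

Definition treewidth_ge (T : finType) (e : rel T) (x : R) : Prop :=
  forall (I : finType) (t : rel I) (B : I -> {set T}),
    tree_decomposition e t B -> Rle x (INR (width B)).

(* For n = 2^m, take the vertices (i, j, l) with row i, column j <= n and level l <= m.  Each
   column is a path through its vertices, row by row and level by level; in each row i the
   level-0 vertices (i, a, 0) and (i, b, 0) are joined whenever [a, b] is a dyadic interval, and
   so are the column-0 vertices (a, 0, 0) and (b, 0, 0).  Through dyadic intervals every vertex
   is within m + m + m steps of (0, 0, 0).
   Every row meets every column and both are connected, so by the Helly property of subtrees
   some bag of a tree decomposition meets all the crosses "row i plus column j"; such a bag meets
   every row or every column, hence has at least n + 1 vertices.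
   Draw (i, j, l) at abscissa j, above row i by the height (j - a) (b - j) of the level-l dyadic
   interval [a, b] around j plus a small level offset.  Row arcs become parabolas over their row
   and column-0 arcs parabolas left of column 0.  Dyadic intervals are laminar, so arcs do not
   cross each other, and the level-l arc over column j passes between levels l - 1 and l: it
   crosses only that column step, which is charged with the crossing. *)

From Stdlib Require Import Reals List Lra Psatz.
From mathcomp Require Import all_boot zify.
Set Implicit Arguments.
Unset Strict Implicit.
Unset Printing Implicit Defensive.

Definition dyadic_arc (m a b : nat) : bool :=
  [exists l : 'I_m.+1, (2 ^ l %| a) && (b == a + 2 ^ l)].

Lemma dyadic_arcP m a b :
  reflect (exists l, [/\ l <= m, 2 ^ l %| a & b = a + 2 ^ l]) (dyadic_arc m a b).
Proof.
apply: (iffP existsP) => [[l /andP [dvd_a /eqP ->]]|[l [le_lm dvd_a ->]]].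
  by exists l; rewrite -ltnS ltn_ord.
by exists (Ordinal (le_lm : l < m.+1)); rewrite /= dvd_a eqxx.
Qed.

Lemma dyadic_arc_lt m a b : dyadic_arc m a b -> a < b.
Proof. by case/dyadic_arcP => l [_ _ ->]; rewrite -{1}[a]addn0 ltn_add2l expn_gt0. Qed.

Lemma dyadic_arc_irr m a : dyadic_arc m a a = false.
Proof. by apply/negbTE/negP => arc_aa; have := dyadic_arc_lt arc_aa; rewrite ltnn. Qed.

Lemma aligned_intervals_laminar l l' a c : l <= l' -> 2 ^ l %| a -> 2 ^ l' %| c ->
  [\/ a + 2 ^ l <= c, c + 2 ^ l' <= a | c <= a /\ a + 2 ^ l <= c + 2 ^ l'].
Proof.
move=> le_ll' /dvdnP [x ->] /dvdnP [y ->].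
rewrite -(subnK le_ll') expnD mulnA.
have P_gt0 : 0 < 2 ^ l by rewrite expn_gt0.
set P := 2 ^ l; set q := 2 ^ (l' - l).
case: (ltnP x (y * q)) => [lt_xyq|le_yqx].
  by apply: Or31; rewrite -mulSnr leq_pmul2r.
case: (ltnP x (y * q + q)) => [lt_x|le_x].
  apply: Or33; rewrite leq_pmul2r // le_yqx -mulSnr -mulnDl leq_pmul2r //.
by apply: Or32; rewrite -mulnDl leq_pmul2r.
Qed.

Lemma dyadic_arc_laminar m a b c d : dyadic_arc m a b -> dyadic_arc m c d ->
  [\/ b <= c, d <= a, a <= c /\ d <= b | c <= a /\ b <= d].
Proof.
case/dyadic_arcP => l [_ dvd_a ->]; case/dyadic_arcP => l' [_ dvd_c ->].
case: (leqP l l') => [le_ll'|/ltnW le_l'l].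
  by case: (aligned_intervals_laminar le_ll' dvd_a dvd_c) => h;
    [apply: Or41 | apply: Or42 | apply: Or44].
by case: (aligned_intervals_laminar le_l'l dvd_c dvd_a) => h;
  [apply: Or42 | apply: Or41 | apply: Or43].
Qed.

(* For the level-[l] dyadic interval [a, b] containing [j], this is [(j - a) * (b - j)]. *)
Definition dyadic_height (j l : nat) : nat := (j %% 2 ^ l) * (2 ^ l - j %% 2 ^ l).

Lemma dyadic_height0 j : dyadic_height j 0 = 0.
Proof. by rewrite /dyadic_height expn0 modn1. Qed.

Lemma modn_exp2S j l :
  j %% 2 ^ l.+1 = j %% 2 ^ l \/ j %% 2 ^ l.+1 = j %% 2 ^ l + 2 ^ l.
Proof.
have P_gt0 : 0 < 2 ^ l by rewrite expn_gt0.
have lt_mod : j %% 2 ^ l.+1 < 2 ^ l.+1 by rewrite ltn_mod expn_gt0.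
have mod_mod : j %% 2 ^ l.+1 %% 2 ^ l = j %% 2 ^ l.
  by rewrite modn_dvdm // expnS dvdn_mull.
have : j %% 2 ^ l.+1 %/ 2 ^ l < 2 by rewrite ltn_divLR // -expnS.
move: (divn_eq (j %% 2 ^ l.+1) (2 ^ l)); rewrite mod_mod.
by case: (_ %/ _) => [|[|]] //= -> _; [left | right]; lia.
Qed.

Section DyadicHeightS.
Variables j l : nat.

Let lt_mod : j %% 2 ^ l < 2 ^ l.
Proof. by rewrite ltn_mod expn_gt0. Qed.
Let exp2S : 2 ^ l.+1 = 2 ^ l + 2 ^ l.
Proof. by rewrite expnS mul2n addnn. Qed.

Lemma dyadic_heightS_gt :
  0 < dyadic_height j l.+1 -> dyadic_height j l < dyadic_height j l.+1.
Proof. by rewrite /dyadic_height; case: (modn_exp2S j l) => ->; rewrite exp2S; nia. Qed.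

Lemma dyadic_height_leS : dyadic_height j l <= dyadic_height j l.+1.
Proof. by rewrite /dyadic_height; case: (modn_exp2S j l) => ->; rewrite exp2S; nia. Qed.

End DyadicHeightS.

Lemma dyadic_height_monotone j : {homo dyadic_height j : l l' / l <= l'}.
Proof. by apply: homo_leq => [//||l]; [apply: leq_trans | apply: dyadic_height_leS]. Qed.

Lemma dyadic_height_bound j l m : l <= m -> dyadic_height j l <= 2 ^ m * 2 ^ m.
Proof.
move=> le_lm; have lt_mod : j %% 2 ^ l < 2 ^ l by rewrite ltn_mod expn_gt0.
have : 2 ^ l <= 2 ^ m by rewrite leq_exp2l.
rewrite /dyadic_height; nia.
Qed.

Lemma dyadic_height_arc m a b j : dyadic_arc m a b -> a < j < b ->
  exists l, [/\ 0 < l <= m, dyadic_height j l = (j - a) * (b - j),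
             b = a + 2 ^ l & a = 2 ^ l * (j %/ 2 ^ l)].
Proof.
case/dyadic_arcP => l [le_lm /dvdnP [k ->] ->] /andP [lt_aj lt_jb].
have P_gt0 : 0 < 2 ^ l by rewrite expn_gt0.
have def_j : j = k * 2 ^ l + (j - k * 2 ^ l) by rewrite subnKC // ltnW.
have lt_r : j - k * 2 ^ l < 2 ^ l by lia.
have mod_j : j %% 2 ^ l = j - k * 2 ^ l by rewrite {1}def_j modnMDl modn_small.
have div_j : j %/ 2 ^ l = k by rewrite {1}def_j divnMDl // divn_small // addn0.
exists l; split.
- by rewrite le_lm andbT lt0n; apply/eqP => l0; move: lt_aj lt_jb; rewrite l0 expn0; lia.
- by rewrite /dyadic_height mod_j; congr (_ * _); lia.
- by [].
- by rewrite div_j mulnC.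
Qed.

Definition induced_rel (T : finType) (e : rel T) (S : {set T}) : rel T :=
  [rel x y | [&& e x y, x \in S & y \in S]].

Definition connected_set (T : finType) (e : rel T) (S : {set T}) : Prop :=
  forall a b, a \in S -> b \in S -> connect (induced_rel e S) a b.

Section InducedConnectivity.
Variables (T : finType) (e : rel T).

Lemma induced_connect_sub (A B : {set T}) x y : A \subset B ->
  connect (induced_rel e A) x y -> connect (induced_rel e B) x y.
Proof.
move=> /subsetP sAB; apply: connect_sub => {}x {}y /and3P [e_xy xA yA].
by apply: connect1; rewrite /induced_rel /= e_xy !sAB.
Qed.

Lemma connected_set_from (S : {set T}) c : symmetric e ->
  (forall x, x \in S -> connect (induced_rel e S) c x) -> connected_set e S.
Proof.
move=> e_sym c_S a b aS bS.
have sym_S : symmetric (induced_rel e S).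
  by move=> x y; rewrite /induced_rel /= e_sym; congr (_ && _); apply: andbC.
by apply: connect_trans (c_S b bS); rewrite (sym_connect_sym sym_S) c_S.
Qed.

Lemma connected_setU (A B : {set T}) : symmetric e ->
  connected_set e A -> connected_set e B -> A :&: B != set0 -> connected_set e (A :|: B).
Proof.
move=> e_sym A_conn B_conn /set0Pn [c /setIP [cA cB]].
apply: (connected_set_from (c := c)) => // x /setUP [xA|xB].
  exact: induced_connect_sub (subsetUl A B) (A_conn c x cA xA).
exact: induced_connect_sub (subsetUr A B) (B_conn c x cB xB).
Qed.

End InducedConnectivity.

Lemma path_suffix (T : eqType) (e : rel T) x p s1 y s2 :
  x :: p = s1 ++ y :: s2 -> path e x p -> path e y s2.
Proof.
case: s1 => [|z s1] /= [-> ->] //.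
by rewrite cat_path => /andP [_] /= /andP [_ ->].
Qed.

Section Subtrees.
Variables (I : finType) (t : rel I).
Hypotheses (t_sym : symmetric t) (t_irr : irreflexive t).
Hypothesis t_acyclic : forall (x : I) (p : seq I),
  ~ (2 <= size p /\ uniq (x :: p) /\ path t x p /\ t (last x p) x).

Definition pendant (S : {set I}) (l : I) : Prop :=
  forall y y', y \in S -> y' \in S -> t l y -> t l y' -> y = y'.

Lemma pendantS (S U : {set I}) l : S \subset U -> pendant U l -> pendant S l.
Proof. by move=> /subsetP sSU lU y y' /sSU yU /sSU y'U; apply: lU. Qed.

Lemma acyclic_path_end_neighbour x q z y :
  path t x (rcons q z) -> uniq (x :: rcons q z) -> y \in x :: rcons q z -> t z y ->
  y = last x q.
Proof.
move=> pth uniq_p y_p t_zy.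
have y_q : y \in x :: q.
  move: y_p; rewrite -rcons_cons mem_rcons inE.
  by case: eqP t_zy => [->|//]; rewrite t_irr.
apply/eqP/negPn/negP => y_not_last.
case/splitPr def_xq: {1}(x :: q) / y_q => [s1 s2].
have def_p : x :: rcons q z = s1 ++ y :: rcons s2 z.
  by rewrite -rcons_cons def_xq rcons_cat rcons_cons.
have last_q : last x q = last y s2.
  by rewrite -[last x q]/(last x (x :: q)) def_xq last_cat.
case: s2 => [|w s2] in def_xq def_p last_q; first by rewrite last_q eqxx in y_not_last.
apply: (t_acyclic (x := y) (p := rcons (w :: s2) z)); split; first by rewrite size_rcons.
split; first by move: uniq_p; rewrite def_p cat_uniq => /and3P [].
by rewrite last_rcons (path_suffix def_p pth).
Qed.

Lemma path_end_pendant (U : {set I}) x p :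
  uniq (x :: p) -> path t x p ->
  (forall y, y \in U -> t (last x p) y -> y \in x :: p) -> pendant U (last x p).
Proof.
move=> uniq_p pth closed y y' yU y'U.
case/lastP: p => [|q z] in uniq_p pth closed *.
  by move=> ty; have := closed y yU ty; rewrite inE => /eqP y_x; rewrite y_x /= t_irr in ty.
rewrite last_rcons in closed * => ty ty'.
by rewrite (acyclic_path_end_neighbour pth uniq_p (closed y yU ty) ty)
           (acyclic_path_end_neighbour pth uniq_p (closed y' y'U ty') ty').
Qed.

Lemma exists_pendant (U : {set I}) : U != set0 -> exists2 l, l \in U & pendant U l.
Proof.
(* Extend a path of U from x for as long as possible; by acyclicity it ends at a pendant vertex. *)
case/set0Pn => x xU.
suff: forall p, all (mem U) (x :: p) -> uniq (x :: p) -> path t x p ->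
    exists2 l, l \in U & pendant U l by move/(_ [::]); apply; rewrite /= ?xU.
move=> p; have [k] := ubnP (#|U| - size p); elim: k p => // k IH p lt_k pU uniq_p pth.
case: (pickP [pred y | [&& y \in U, t (last x p) y & y \notin x :: p]]) => [y|closed].
  case/and3P => yU t_y y_new.
  have uniq_py : uniq (x :: rcons p y) by rewrite -rcons_cons rcons_uniq y_new.
  have py_U : all (mem U) (x :: rcons p y) by rewrite -rcons_cons all_rcons pU andbT; apply: yU.
  have : size (x :: rcons p y) <= #|U|.
    by rewrite cardE uniq_leq_size // => w /(allP py_U); rewrite mem_enum.
  rewrite /= size_rcons => size_py.
  apply: (IH (rcons p y)) => //; last by rewrite rcons_path pth.
  by rewrite size_rcons; lia.
exists (last x p); first by apply: (allP pU); apply: mem_last.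
apply: path_end_pendant => // y yU ty.
by apply: contraFT (closed y) => y_new; rewrite /= yU ty.
Qed.

Lemma connected_setD1 (S : {set I}) l :
  connected_set t S -> pendant S l -> connected_set t (S :\ l).
Proof.
(* On a duplicate-free path of S through l, both path neighbours of l are its neighbour in S. *)
move=> S_conn l_pendant a b; rewrite !inE => /andP [a_l aS] /andP [b_l bS].
have /connectP [p0 pth0 def_b] := S_conn a b aS bS.
move: b_l; rewrite def_b; case: (shortenP pth0) => p pth uniq_p _ b_l {p0 pth0 def_b}.
case: (boolP (l \in p)) => [l_p|l_p].
  case/splitPr: p / l_p pth uniq_p b_l => p1 [|w p2] pth uniq_p b_l.
    by rewrite last_cat eqxx in b_l.
  move: pth; rewrite cat_path /=.
  case/and3P => _ /and3P [t_last_l lastS _] /andP [/and3P [t_lw _ wS] _].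
  have last_w : last a p1 = w by apply: l_pendant; rewrite // t_sym.
  move: uniq_p; rewrite -cat_cons cat_uniq => /and3P [_ /negP[]].
  by rewrite /= inE -last_w mem_last orbT.
apply/connectP; exists p => //.
elim: p a a_l aS {uniq_p b_l} pth l_p => //= w p IH a a_l aS.
case/andP => /and3P [t_aw _ wS] pth; rewrite ?inE negb_or eq_sym => /andP [w_l l_p].
by rewrite (IH w) // andbT /induced_rel /= !inE a_l aS w_l wS t_aw.
Qed.

Lemma connected_neighbour (S : {set I}) l :
  connected_set t S -> l \in S -> S != [set l] -> exists2 y, y \in S & t l y.
Proof.
move=> S_conn lS S_l.
have [x xS x_l] : exists2 x, x \in S & x != l.
  apply/exists_inP; apply: contraNT S_l => /exists_inPn S_in_l.
  by apply/eqP/setP => z; rewrite inE; apply/idP/eqP => [/S_in_l/negPn/eqP|->].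
have /connectP [[|y p] //=] := S_conn l x lS xS; first by move=> _ /eqP; rewrite (negbTE x_l).
by case/andP => /and3P [t_ly _ yS] _ _; exists y.
Qed.

Lemma subtree_helly (K : finType) (i0 : K) (F : K -> {set I}) :
  (forall i, F i != set0) -> (forall i, connected_set t (F i)) ->
  (forall i j, F i :&: F j != set0) -> exists a, forall i, a \in F i.
Proof.
(* Remove a pendant vertex l of the union: unless some F i is [set l], every F i containing l
   also contains the neighbour of l, so the trimmed family still satisfies the hypotheses. *)
have [k] := ubnP #|\bigcup_i F i|; elim: k F => // k IH F lt_k F_nonempty F_conn F_meet.
set U := \bigcup_i F i in lt_k.
have F_U i : F i \subset U by apply: bigcup_sup.
have [l lU l_pendant] : exists2 l, l \in U & pendant U l.
  by apply: exists_pendant; apply: contraNneq (F_nonempty i0) => U0; rewrite -subset0 -U0.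
have F_pendant i : pendant (F i) l by apply: pendantS l_pendant.
case: (pickP [pred i | F i == [set l]]) => [i /eqP Fi_l|F_not_l].
  by exists l => j; case/set0Pn: (F_meet i j) => w; rewrite Fi_l !inE => /andP [/eqP ->].
have nb i : l \in F i -> exists2 y, y \in F i :\ l & t l y.
  move=> l_Fi; have [y yF t_ly] := connected_neighbour (F_conn i) l_Fi (negbT (F_not_l i)).
  by exists y; rewrite // !inE yF andbT; apply: contraTneq t_ly => ->; rewrite t_irr.
have [a a_F] : exists a, forall i, a \in F i :\ l.
  have in_U i y : y \in F i :\ l -> y \in U by case/setD1P => _; apply: (subsetP (F_U i)).
  apply: IH => [|i|i|i j].
  - have sub : \bigcup_i (F i :\ l) \subset U :\ l by apply/bigcupsP => i _; apply: setSD.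
    apply: leq_ltn_trans (subset_leq_card sub) _.
    by move: lt_k; rewrite (cardsD1 l U) lU /=; lia.
  - case/set0Pn: (F_nonempty i) => x xF; apply/set0Pn; case: (eqVneq x l) => [x_l|x_l].
      by rewrite x_l in xF; have [y y_F _] := nb i xF; exists y.
    by exists x; rewrite !inE x_l.
  - by apply: connected_setD1 (F_conn i) (F_pendant i).
  - case/set0Pn: (F_meet i j) => w /setIP [wi wj]; apply/set0Pn.
    case: (eqVneq w l) => [w_l|w_l]; last by exists w; rewrite !inE w_l wi wj.
    rewrite w_l in wi wj; have [y yi ty] := nb i wi; have [y' yj ty'] := nb j wj.
    have y_y' : y = y' by apply: l_pendant => //; [apply: in_U yi | apply: in_U yj].
    by exists y; rewrite inE yi y_y' yj.
by exists a => i; have /setD1P [] := a_F i.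
Qed.

End Subtrees.

Section BagSupport.
Variables (T I : finType) (e : rel T) (t : rel I) (B : I -> {set T}).
Hypothesis B_td : tree_decomposition e t B.

Definition bag_support (X : {set T}) : {set I} := [set a | [exists v in X, v \in B a]].

Lemma bag_supportP (X : {set T}) a :
  reflect (exists2 v, v \in X & v \in B a) (a \in bag_support X).
Proof. by rewrite inE; apply: exists_inP. Qed.

Lemma bag_support_connect (X : {set T}) v a c : v \in X -> v \in B a -> v \in B c ->
  connect (induced_rel t (bag_support X)) a c.
Proof.
move=> vX va vc; case: B_td => _ [_ [_ B_conn]].
apply: connect_sub (B_conn v a c va vc) => x y /and3P [t_xy vx vy].
apply: connect1; rewrite /induced_rel /= t_xy /=.
by apply/andP; split; apply/bag_supportP; exists v.
Qed.

Lemma bag_support_connected (X : {set T}) :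
  connected_set e X -> connected_set t (bag_support X).
Proof.
move=> X_conn a b /bag_supportP [u uX ua] /bag_supportP [w wX wb].
have /connectP [p pth def_w] := X_conn u w uX wX.
elim: p u a uX ua pth def_w => [|w' p IH] u a uX ua /=.
  by move=> _ w_u; apply: bag_support_connect uX ua _; rewrite -w_u.
case/andP => /and3P [e_uw' _ w'X] pth def_w.
case: B_td => _ [_ [B_edge _]]; have [c /andP [uc w'c]] := B_edge u w' e_uw'.
exact: connect_trans (bag_support_connect uX ua uc) (IH w' c w'X w'c pth def_w).
Qed.

Lemma bag_card_le_width a : #|B a| <= (width B).+1.
Proof. exact: leq_trans (leq_bigmax a) (leqSpred _). Qed.

Lemma width_ge_crosses (K : finType) (R C : K -> {set T}) (row col : T -> K) :
  (forall i v, v \in R i -> row v = i) -> (forall j v, v \in C j -> col v = j) ->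
  (forall i j, R i :&: C j != set0) -> (forall i j, connected_set e (R i :|: C j)) ->
  #|K| <= (width B).+1.
Proof.
move=> R_row C_col RC_meet RC_conn.
case: (posnP #|K|) => [-> //|/card_gt0P [i0 _]].
have [[[t_sym t_irr] [_ [_ t_acyclic]]] [B_cover _]] := B_td.
have [a a_cross] : exists a, forall k : K * K, a \in bag_support (R k.1 :|: C k.2).
  apply: (subtree_helly t_sym t_irr t_acyclic (i0, i0)) => [k|k|k k'].
  - case/set0Pn: (RC_meet k.1 k.2) => v /setIP [vR _]; have [a va] := B_cover v.
    by apply/set0Pn; exists a; apply/bag_supportP; exists v; rewrite // inE vR.
  - exact: bag_support_connected.
  - case/set0Pn: (RC_meet k.1 k'.2) => v /setIP [vR vC]; have [a va] := B_cover v.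
    apply/set0Pn; exists a; rewrite inE.
    by apply/andP; split; apply/bag_supportP; exists v; rewrite // !inE ?vR ?vC ?orbT.
(* The bag B a meets every cross; if it misses some R i, it meets every C j. *)
apply: leq_trans (bag_card_le_width a).
case: (boolP [forall i, [exists v in B a, v \in R i]]) => [/forallP B_rows|].
  apply: leq_trans (leq_imset_card row (B a)); rewrite -cardsT subset_leq_card //.
  apply/subsetP => i _; have /exists_inP [v va vR] := B_rows i.
  by apply/imsetP; exists v; rewrite // (R_row i v vR).
rewrite negb_forall => /existsP [i /exists_inPn B_miss_Ri].
apply: leq_trans (leq_imset_card col (B a)); rewrite -cardsT subset_leq_card //.
apply/subsetP => j _; have /bag_supportP [v] := a_cross (i, j).
case/setUP => [vR|vC] va; first by have := B_miss_Ri v va; rewrite vR.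
by apply/imsetP; exists v; rewrite // (C_col j v vC).
Qed.

End BagSupport.

Definition reach (T : Type) (e : rel T) (k : nat) (x y : T) : Prop :=
  exists p, size p <= k /\ path e x p /\ last x p = y.

Section Reach.
Variables (T : Type) (e : rel T).

Lemma reach0 x : reach e 0 x x.
Proof. by exists [::]. Qed.

Lemma reach1 x y : e x y -> reach e 1 x y.
Proof. by exists [:: y]; rewrite /= andbT. Qed.

Lemma reach_le k k' x y : k <= k' -> reach e k x y -> reach e k' x y.
Proof. by move=> le_kk' [p [size_p p_xy]]; exists p; rewrite (leq_trans size_p). Qed.

Lemma reach_trans k k' x y z : reach e k x y -> reach e k' y z -> reach e (k + k') x z.
Proof.
move=> [p [size_p [pth <-]]] [q [size_q [qth <-]]].
by exists (p ++ q); rewrite size_cat leq_add // cat_path pth qth last_cat.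
Qed.

Lemma chain_reach (f : nat -> T) k :
  (forall i, i < k -> e (f i) (f i.+1)) -> reach e k (f 0) (f k).
Proof.
elim: k => [|k IH] f_chain; first exact: reach0.
have := reach_trans (IH (fun i lt_ik => f_chain i (ltnW lt_ik))) (reach1 (f_chain k (ltnSn k))).
by rewrite addn1.
Qed.

Section Dyadic.
Variables (m : nat) (f : nat -> T).
Hypothesis f_dyadic : forall x l, l <= m -> 2 ^ l %| x -> x + 2 ^ l <= 2 ^ m ->
  e (f x) (f (x + 2 ^ l)).

(* Greedy binary expansion of j, from the highest bit down. *)
Lemma dyadic_reach_below k s j : k <= m -> 2 ^ k %| s -> s + j <= 2 ^ m -> j < 2 ^ k ->
  reach e k (f s) (f (s + j)).
Proof.
elim: k s j => [|k IH] s j le_km dvd_s le_sj.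
  by rewrite expn0 ltnS leqn0 => /eqP ->; rewrite addn0; apply: reach0.
have dvd_s' : 2 ^ k %| s by apply: dvdn_trans dvd_s; rewrite expnS dvdn_mull.
case: (ltnP j (2 ^ k)) => [lt_j _|le_j lt_j].
  by apply: (reach_le (leqnSn k)); apply: IH => //; apply: ltnW.
have -> : s + j = s + 2 ^ k + (j - 2 ^ k) by lia.
rewrite -add1n; apply: reach_trans (reach1 (f_dyadic _ _ _)) (IH _ _ _ _ _ _) => //.
- exact: ltnW.
- lia.
- exact: ltnW.
- by rewrite dvdn_addr.
- lia.
- by move: lt_j; rewrite expnS; lia.
Qed.

Lemma dyadic_reach j : 0 < m -> j <= 2 ^ m -> reach e m (f 0) (f j).
Proof.
move=> m_gt0; rewrite leq_eqVlt => /orP [/eqP ->|lt_j].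
  by apply: (reach_le m_gt0); apply: reach1; rewrite -[2 ^ m]add0n f_dyadic.
by have := dyadic_reach_below (leqnn m) (dvdn0 _) (ltnW lt_j) lt_j; rewrite add0n.
Qed.

End Dyadic.
End Reach.

Lemma reach_connect (T : finType) (e : rel T) k x y : reach e k x y -> connect e x y.
Proof. by move=> [p [_ [pth <-]]]; apply/connectP; exists p. Qed.

Section DyadicGrid.
Variable m : nat.
Local Notation n := (2 ^ m).

(* [(i, j, l)] is the vertex of row [i], column [j] and level [l]. *)
Definition grid_vertex := ('I_n.+1 * 'I_n.+1 * 'I_m.+1)%type.

(* Position along the path formed by a column: rows bottom to top, levels within a row. *)
Definition code (v : grid_vertex) : nat := v.1.1 * m.+1 + v.2.

Definition row_arc (a b : grid_vertex) : bool :=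
  [&& a.1.1 == b.1.1, a.2 == 0 :> nat, b.2 == 0 :> nat & dyadic_arc m a.1.2 b.1.2].

Definition root_arc (a b : grid_vertex) : bool :=
  [&& a.1.2 == 0 :> nat, b.1.2 == 0 :> nat, a.2 == 0 :> nat, b.2 == 0 :> nat
    & dyadic_arc m a.1.1 b.1.1].

Definition column_step (a b : grid_vertex) : bool :=
  (a.1.2 == b.1.2) && (code b == (code a).+1).

Definition grid_edge (a b : grid_vertex) : bool :=
  [|| row_arc a b, root_arc a b | column_step a b].

Definition grid_adj (u v : grid_vertex) : bool := grid_edge u v || grid_edge v u.

Lemma grid_adj_sym : symmetric grid_adj.
Proof. by move=> u v; rewrite /grid_adj orbC. Qed.

Lemma grid_adj_irr : irreflexive grid_adj.
Proof.
move=> v; rewrite /grid_adj orbb /grid_edge /row_arc /root_arc /column_step.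
by rewrite !dyadic_arc_irr (ltn_eqF (ltnSn _)) !andbF.
Qed.

Lemma grid_vertex_eq (u v : grid_vertex) :
  u.1.1 = v.1.1 :> nat -> u.1.2 = v.1.2 :> nat -> u.2 = v.2 :> nat -> u = v.
Proof.
by case: u v => [[? ?] ?] [[? ?] ?] /= eq_row eq_col eq_lev; congr (_, _, _); apply: val_inj.
Qed.

Lemma code_ltn v : code v < n.+1 * m.+1.
Proof. by rewrite /code; have := ltn_ord v.1.1; have := ltn_ord v.2; nia. Qed.

Lemma code_inj_column (u v : grid_vertex) : u.1.2 = v.1.2 -> code u = code v -> u = v.
Proof.
rewrite /code => eq_col eq_code; have := ltn_ord u.2; have := ltn_ord v.2 => lt_v lt_u.
have eq_row : u.1.1 = v.1.1 :> nat by nia.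
by apply: grid_vertex_eq; rewrite ?eq_col //; move: eq_code; rewrite eq_row; lia.
Qed.

Definition column_vertex (j : 'I_n.+1) (k : nat) : grid_vertex :=
  (inord (k %/ m.+1), j, inord (k %% m.+1)).

Lemma code_column_vertex j k : k < n.+1 * m.+1 -> code (column_vertex j k) = k.
Proof.
move=> lt_k; rewrite /code /= !inordK ?ltn_pmod // -?divn_eq //.
by rewrite ltnS -ltnS ltn_divLR.
Qed.

Lemma column_vertex_code v : column_vertex v.1.2 (code v) = v.
Proof. by apply: code_inj_column => //; rewrite code_column_vertex ?code_ltn. Qed.

Lemma column_step_vertex j k : k.+1 < n.+1 * m.+1 ->
  column_step (column_vertex j k) (column_vertex j k.+1).
Proof. by move=> lt_k; rewrite /column_step /= eqxx !code_column_vertex ?eqxx //; apply: ltnW. Qed.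

Lemma grid_adj_row (i : 'I_n.+1) x l : l <= m -> 2 ^ l %| x -> x + 2 ^ l <= n ->
  grid_adj (i, inord x, ord0) (i, inord (x + 2 ^ l), ord0).
Proof.
move=> le_lm dvd_x le_n; rewrite /grid_adj /grid_edge /row_arc /= eqxx !inordK; [|lia|lia].
by apply/orP; left; apply/or3P; apply: Or31; apply/dyadic_arcP; exists l.
Qed.

Lemma grid_adj_root x l : l <= m -> 2 ^ l %| x -> x + 2 ^ l <= n ->
  grid_adj (inord x, ord0, ord0) (inord (x + 2 ^ l), ord0, ord0).
Proof.
move=> le_lm dvd_x le_n; rewrite /grid_adj /grid_edge /root_arc /= !inordK; [|lia|lia].
by apply/orP; left; apply/or3P; apply: Or32; apply/dyadic_arcP; exists l.
Qed.

Lemma grid_adj_column j k : k.+1 < n.+1 * m.+1 ->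
  grid_adj (column_vertex j k) (column_vertex j k.+1).
Proof. by move=> lt_k; rewrite /grid_adj /grid_edge column_step_vertex ?orbT. Qed.

Hypothesis m_gt0 : 0 < m.

Lemma grid_radius : radius_le grid_adj (3 * m).
Proof.
exists (inord 0, ord0, ord0) => v.
have reach_root : reach grid_adj m (inord 0, ord0, ord0) (v.1.1, ord0, ord0).
  rewrite -[v.1.1]inord_val.
  apply: (dyadic_reach (f := fun x => (inord x, ord0, ord0))) => //; first exact: grid_adj_root.
  by rewrite -ltnS.
have reach_row : reach grid_adj m (v.1.1, ord0, ord0) (v.1.1, v.1.2, ord0).
  rewrite -[v.1.2]inord_val -[ord0 in (_, ord0, _)](@inord_val n) /=.
  apply: (dyadic_reach (f := fun x => (v.1.1, inord x, ord0))) => //; first exact: grid_adj_row.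
  by rewrite -ltnS.
have reach_column : reach grid_adj m (v.1.1, v.1.2, ord0) v.
  apply: (reach_le (leq_ord v.2)).
  set w : grid_vertex := (v.1.1, v.1.2, ord0).
  have code_v : code w + v.2 = code v by rewrite /code /= addn0.
  have := chain_reach (e := grid_adj) (f := fun s => column_vertex v.1.2 (code w + s)) (k := v.2).
  rewrite /= addn0 code_v column_vertex_code (column_vertex_code w).
  apply=> s lt_s; rewrite addnS.
  by apply: grid_adj_column; apply: leq_ltn_trans (code_ltn v); rewrite -code_v -addnS leq_add2l.
have := reach_trans (reach_trans reach_root reach_row) reach_column.
by rewrite -addnA addnn -mul2n -mulSn.
Qed.

Definition row_set (i : 'I_n.+1) : {set grid_vertex} :=
  [set v | (v.1.1 == i) && (v.2 == ord0)].
Definition column_set (j : 'I_n.+1) : {set grid_vertex} := [set v | v.1.2 == j].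

Lemma row_set_connected i : connected_set grid_adj (row_set i).
Proof.
apply: (connected_set_from (c := (i, inord 0, ord0))) => [|v]; first exact: grid_adj_sym.
rewrite inE => /andP [/eqP v_i /eqP v_0].
have -> : v = (i, inord v.1.2, ord0) by rewrite -v_i -v_0 inord_val; case: v {v_i v_0} => [[]].
apply: reach_connect (dyadic_reach (f := fun x => (i, inord x, ord0)) _ m_gt0 _).
  by move=> x l le_lm dvd_x le_n; rewrite /induced_rel /= grid_adj_row // !inE !eqxx.
by rewrite -ltnS.
Qed.

Lemma column_set_connected j : connected_set grid_adj (column_set j).
Proof.
apply: (connected_set_from (c := column_vertex j 0)) => [|v]; first exact: grid_adj_sym.
rewrite inE => /eqP v_j; rewrite -(column_vertex_code v) v_j.
apply: reach_connect (chain_reach (f := column_vertex j) _) => k lt_k.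
by rewrite /induced_rel /= grid_adj_column ?(leq_ltn_trans lt_k (code_ltn v)) // !inE !eqxx.
Qed.

Lemma grid_treewidth (I : finType) (t : rel I) (B : I -> {set grid_vertex}) :
  tree_decomposition grid_adj t B -> n <= width B.
Proof.
move=> B_td.
have := width_ge_crosses B_td (R := row_set) (C := column_set)
  (row := fun v => v.1.1) (col := fun v => v.1.2).
rewrite card_ord ltnS; apply=> [i v|j v|i j|i j].
- by rewrite inE => /andP [/eqP].
- by rewrite inE => /eqP.
- by apply/set0Pn; exists (i, j, ord0); rewrite !inE !eqxx.
- apply: connected_setU; [exact: grid_adj_sym | exact: row_set_connected |
    exact: column_set_connected | apply/set0Pn].
  by exists (i, j, ord0); rewrite !inE !eqxx.
Qed.

End DyadicGrid.

Open Scope R_scope.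

Lemma ltn_INR a b : (a < b)%N -> INR a < INR b.
Proof. by move/ltP; apply: lt_INR. Qed.

Lemma leq_INR a b : (a <= b)%N -> INR a <= INR b.
Proof. by move/leP; apply: le_INR. Qed.

Lemma INR_ltn a b : INR a < INR b -> (a < b)%N.
Proof. by move/INR_lt/ltP. Qed.

Lemma INR_subn a b : (b <= a)%N -> INR (a - b) = INR a - INR b.
Proof. by move/leP; apply: minus_INR. Qed.

Lemma INR_expn a k : INR (a ^ k) = INR a ^ k.
Proof. by elim: k => [|k IH] //; rewrite expnS mult_INR IH. Qed.

Lemma INR_S_le a b : (a < b)%N -> INR a + 1 <= INR b.
Proof. by rewrite -S_INR; move/leP; apply: le_INR. Qed.

Section Heights.
Variable m : nat.
Local Notation n := (2 ^ m)%N.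
Local Notation grid_vertex := (grid_vertex m).
Local Notation code := (@code m).

(* Exceeds every arc and every row offset, so that the rows occupy disjoint horizontal strips. *)
Definition row_height : R := INR (n * n + 1).

(* Any strictly increasing offset with values in [0, 1) would do. *)
Definition level_offset (l : nat) : R := INR l / INR (2 * m + 2).

Definition row_offset (j l : nat) : R := INR (dyadic_height j l) + level_offset l.

Definition height (v : grid_vertex) : R := INR v.1.1 * row_height + row_offset v.1.2 v.2.

Definition place (v : grid_vertex) : point := (INR v.1.2, height v).

Lemma row_height_gt0 : 0 < row_height.
Proof. by apply: lt_0_INR; apply/ltP; rewrite addn1. Qed.

Lemma level_offset_denom_gt0 : 0 < INR (2 * m + 2).
Proof. by apply: lt_0_INR; apply/ltP; lia. Qed.

Lemma level_offset_ge0 l : 0 <= level_offset l.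
Proof.
by apply: Rmult_le_pos; [apply: pos_INR | apply/Rlt_le/Rinv_0_lt_compat/level_offset_denom_gt0].
Qed.

Lemma level_offset_gt0 l : (0 < l)%N -> 0 < level_offset l.
Proof.
move=> l_gt0; apply: Rdiv_lt_0_compat; last exact: level_offset_denom_gt0.
by apply: lt_0_INR; apply/ltP.
Qed.

Lemma level_offset_lt1 l : (l <= m)%N -> level_offset l < 1.
Proof.
move=> le_lm; have den_gt0 := level_offset_denom_gt0.
apply: (Rmult_lt_reg_r _ _ _ den_gt0); rewrite /level_offset /Rdiv Rmult_assoc Rinv_l; last lra.
by rewrite Rmult_1_r Rmult_1_l; apply: ltn_INR; lia.
Qed.

Lemma level_offset_lt l l' : (l < l')%N -> level_offset l < level_offset l'.
Proof.
move=> lt_ll'; apply: Rmult_lt_compat_r; last exact: ltn_INR.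
exact/Rinv_0_lt_compat/level_offset_denom_gt0.
Qed.

Lemma row_offset0 j : row_offset j 0 = 0.
Proof. by rewrite /row_offset dyadic_height0 /level_offset /= /Rdiv Rmult_0_l Rplus_0_l. Qed.

Lemma row_offset_ge0 j l : 0 <= row_offset j l.
Proof.
by have := pos_INR (dyadic_height j l); have := level_offset_ge0 l; rewrite /row_offset; lra.
Qed.

Lemma row_offset_lt_row_height j l : (l <= m)%N -> row_offset j l < row_height.
Proof.
move=> le_lm; have := leq_INR (dyadic_height_bound j le_lm); have := level_offset_lt1 le_lm.
by rewrite /row_offset /row_height plus_INR /=; lra.
Qed.

Lemma row_offset_lt j l l' : (l < l')%N -> row_offset j l < row_offset j l'.
Proof.
move=> lt_ll'; have := leq_INR (dyadic_height_monotone j (ltnW lt_ll')).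
by have := level_offset_lt lt_ll'; rewrite /row_offset; lra.
Qed.

Lemma row_offset_around j l : (0 < l <= m)%N -> (0 < dyadic_height j l)%N ->
  row_offset j l.-1 < INR (dyadic_height j l) < row_offset j l.
Proof.
case/andP => l_gt0 le_lm height_gt0; have := level_offset_gt0 l_gt0.
have := INR_S_le (dyadic_heightS_gt (j := j) (l := l.-1) _); rewrite prednK //.
move=> /(_ height_gt0); have := level_offset_lt1 (l := l.-1) (leq_trans (leq_pred l) le_lm).
by rewrite /row_offset; lra.
Qed.

Lemma row_offset_eq_INR j l k : (l <= m)%N -> row_offset j l = INR k -> l = 0%N.
Proof.
move=> le_lm; rewrite /row_offset => eq_k; case: (posnP l) => // l_gt0.
have := level_offset_gt0 l_gt0; have := level_offset_lt1 le_lm.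
case: (ltnP (dyadic_height j l) k) => [/INR_S_le|/leq_INR]; lra.
Qed.

Lemma row_height_eq r r' e e' : 0 <= e < row_height -> 0 <= e' < row_height ->
  INR r * row_height + e = INR r' * row_height + e' -> r = r'.
Proof.
move=> e_bd e'_bd eq_rr'; have H_gt0 := row_height_gt0.
by case: (ltngtP r r') => // /INR_S_le lt_rr'; nra.
Qed.

Lemma height_lt (u v : grid_vertex) :
  u.1.2 = v.1.2 -> (code u < code v)%N -> height u < height v.
Proof.
move=> eq_col lt_code; rewrite /height eq_col.
case: (ltngtP u.1.1 v.1.1) => [lt_row|lt_row|eq_row].
- have := row_offset_lt_row_height v.1.2 (leq_ord u.2); have := row_offset_ge0 v.1.2 v.2.
  by have := INR_S_le lt_row; have := row_height_gt0; nra.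
- by move: lt_code; rewrite /code; have := ltn_ord v.2; nia.
- rewrite eq_row; apply: Rplus_lt_compat_l; apply: row_offset_lt.
  by move: lt_code; rewrite /code eq_row ltn_add2l.
Qed.

Lemma height_le (u v : grid_vertex) :
  u.1.2 = v.1.2 -> (code u <= code v)%N -> height u <= height v.
Proof.
move=> eq_col; rewrite leq_eqVlt => /orP [/eqP eq_code|lt_code].
  by rewrite (code_inj_column eq_col eq_code); apply: Rle_refl.
exact/Rlt_le/height_lt.
Qed.

Lemma place_inj : injective place.
Proof.
move=> u v [/INR_eq eq_col eq_height]; have {}eq_col : u.1.2 = v.1.2 by apply: val_inj.
case: (ltngtP (code u) (code v)) => [lt_uv|lt_vu|]; last exact: code_inj_column.
- by have := height_lt eq_col lt_uv; lra.
- by have := height_lt (esym eq_col) lt_vu; lra.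
Qed.

Lemma column_step_gap a b w : column_step a b -> w.1.2 = a.1.2 ->
  ~ (height a < height w < height b).
Proof.
case/andP => /eqP eq_ab /eqP code_b eq_wa [lt_aw lt_wb].
case: (leqP (code w) (code a)) => [le_wa|lt_aw'].
  by have := height_le eq_wa le_wa; lra.
have le_bw : (code b <= code w)%N by rewrite code_b.
by have := height_le (etrans (esym eq_ab) (esym eq_wa)) le_bw; lra.
Qed.

Lemma column_steps_overlap_eq a b c d y : column_step a b -> column_step c d ->
  a.1.2 = c.1.2 -> height a < y < height b -> height c < y < height d -> a = c /\ b = d.
Proof.
move=> ab cd eq_ac y_ab y_cd; have /andP [/eqP eq_ab /eqP code_b] := ab.
have /andP [/eqP eq_cd /eqP code_d] := cd.
have eq_code : code a = code c.
  case: (ltngtP (code a) (code c)) => // [lt_ac|lt_ca].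
    have le_bc : (code b <= code c)%N by rewrite code_b.
    by have := height_le (etrans (esym eq_ab) eq_ac) le_bc; lra.
  have le_da : (code d <= code a)%N by rewrite code_d.
  by have := height_le (etrans (esym eq_cd) (esym eq_ac)) le_da; lra.
split; first exact: code_inj_column.
by apply: code_inj_column; rewrite -?eq_ab -?eq_cd // code_b code_d eq_code.
Qed.

End Heights.

Lemma nested_parabolas_eq a b c d s : a < s < b -> c < s < d ->
  [\/ b <= c, d <= a, a <= c /\ d <= b | c <= a /\ b <= d] ->
  (s - a) * (b - s) = (s - c) * (d - s) -> a = c /\ b = d.
Proof. by move=> [? ?] [? ?] [?|?|[? ?]|[? ?]] ?; try lra; split; nra. Qed.

Lemma dyadic_arc_laminar_scaled m k a b c d : 0 < k ->
  dyadic_arc m a b -> dyadic_arc m c d ->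
  [\/ INR b * k <= INR c * k, INR d * k <= INR a * k,
      INR a * k <= INR c * k /\ INR d * k <= INR b * k
    | INR c * k <= INR a * k /\ INR b * k <= INR d * k].
Proof.
move=> k_gt0 ab cd; have scale x y : (x <= y)%N -> INR x * k <= INR y * k.
  by move/leq_INR => le_xy; apply: Rmult_le_compat_r; lra.
case: (dyadic_arc_laminar ab cd) => [bc|da|[ac db]|[ca bd]].
- by apply: Or41; apply: scale.
- by apply: Or42; apply: scale.
- by apply: Or43; split; apply: scale.
- by apply: Or44; split; apply: scale.
Qed.

Section Drawing.
Variable m : nat.
Hypothesis m_gt0 : (0 < m)%N.
Local Notation n := (2 ^ m)%N.
Local Notation grid_vertex := (grid_vertex m).
Local Notation row_arc := (@row_arc m).
Local Notation root_arc := (@root_arc m).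
Local Notation column_step := (@column_step m).
Local Notation grid_edge := (@grid_edge m).
Local Notation grid_adj := (@grid_adj m).
Local Notation H := (row_height m).
Local Notation height := (@height m).
Local Notation place := (@place m).

Definition root_pair (u v : grid_vertex) : bool :=
  [&& u.1.2 == 0%N :> nat, v.1.2 == 0%N :> nat, u.2 == 0%N :> nat & v.2 == 0%N :> nat].

(* The segment from [place u] to [place v] plus a bump [t (1 - t) D^2]: upwards with [D] the
   horizontal extent, which turns row arcs into the parabolas [y = i H + (s - a) (b - s)] and
   keeps column steps straight, and, between root-column vertices, leftwards with [D] the
   vertical extent. *)
Definition edge_curve (u v : grid_vertex) (t : R) : point :=
  ((1 - t) * (place u).1 + t * (place v).1 -
     (if root_pair u v
      then t * (1 - t) * (((place v).2 - (place u).2) * ((place v).2 - (place u).2)) else 0),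
   (1 - t) * (place u).2 + t * (place v).2 +
     t * (1 - t) * (((place v).1 - (place u).1) * ((place v).1 - (place u).1))).

Lemma root_pairC u v : root_pair u v = root_pair v u.
Proof. by rewrite /root_pair; do 4!case: eqP. Qed.

Lemma edge_curve0 u v : edge_curve u v 0 = place u.
Proof.
by rewrite /edge_curve; case: (place u) (place v) => [? ?] [? ?] /=; case: root_pair; f_equal; ring.
Qed.

Lemma edge_curve1 u v : edge_curve u v 1 = place v.
Proof.
by rewrite /edge_curve; case: (place u) (place v) => [? ?] [? ?] /=; case: root_pair; f_equal; ring.
Qed.

Lemma edge_curve_rev u v t : edge_curve u v t = edge_curve v u (1 - t).
Proof.
rewrite /edge_curve root_pairC; case: (place u) (place v) => [? ?] [? ?] /=.
by case: root_pair; f_equal; ring.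
Qed.

Lemma edge_curve_continuous u v :
  continuity (fun t => (edge_curve u v t).1) /\ continuity (fun t => (edge_curve u v t).2).
Proof. by rewrite /edge_curve /=; split; [case: root_pair|]; reg. Qed.

Definition row_arc_point (a b : grid_vertex) (s : R) : point :=
  (s, INR a.1.1 * H + (s - INR a.1.2) * (INR b.1.2 - s)).

Definition root_arc_point (a b : grid_vertex) (y : R) : point :=
  (- ((y - INR a.1.1 * H) * (INR b.1.1 * H - y)), y).

Definition edge_interior (a b : grid_vertex) (p : point) : Prop :=
  [\/ row_arc a b /\ exists2 s, INR a.1.2 < s < INR b.1.2 & p = row_arc_point a b s,
      root_arc a b /\ exists2 y, INR a.1.1 * H < y < INR b.1.1 * H & p = root_arc_point a b y
    | column_step a b /\ exists2 y, height a < y < height b & p = (INR a.1.2, y)].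

Lemma column_step_not_root_pair a b : column_step a b -> root_pair a b = false.
Proof.
case/andP => _ /eqP code_b; apply/negbTE/and4P => -[_ _ /eqP lev_a /eqP lev_b].
move: code_b; rewrite /code lev_a lev_b !addn0 => /(congr1 (modn^~ m.+1)).
by rewrite modnMl -addn1 modnMDl modn_small.
Qed.

Lemma edge_curve_interior a b t : grid_edge a b -> 0 < t < 1 ->
  edge_interior a b (edge_curve a b t).
Proof.
case/or3P => ab t01.
- have /and4P [/eqP eq_row /eqP lev_a /eqP lev_b arc] := ab.
  have lt_ab := ltn_INR (dyadic_arc_lt arc).
  have not_root : root_pair a b = false.
    by apply/negbTE/and4P => -[_ /eqP b0 _ _]; have := dyadic_arc_lt arc; rewrite b0.
  apply: Or31; split => //; exists ((1 - t) * INR a.1.2 + t * INR b.1.2); first by split; nra.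
  rewrite /edge_curve not_root /row_arc_point /place /height eq_row lev_a lev_b !row_offset0 /=.
  by f_equal; ring.
- have /and5P [/eqP col_a /eqP col_b /eqP lev_a /eqP lev_b arc] := ab.
  have lt_ab : INR a.1.1 * H < INR b.1.1 * H.
    by apply: Rmult_lt_compat_r; [apply: row_height_gt0 | apply/ltn_INR/dyadic_arc_lt/arc].
  have root : root_pair a b by rewrite /root_pair col_a col_b lev_a lev_b.
  apply: Or32; split => //; exists ((1 - t) * (INR a.1.1 * H) + t * (INR b.1.1 * H)).
    by split; nra.
  rewrite /edge_curve root /root_arc_point /place /height col_a col_b lev_a lev_b !row_offset0 /=.
  by f_equal; ring.
- have /andP [/eqP eq_col /eqP code_b] := ab.
  have lt_ab : height a < height b by apply: height_lt; rewrite // code_b.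
  apply: Or33; split => //; exists ((1 - t) * height a + t * height b); first by split; nra.
  by rewrite /edge_curve column_step_not_root_pair // /place eq_col /=; f_equal; ring.
Qed.

Lemma on_edge_interior u v p : grid_adj u v -> on_edge edge_curve u v p ->
  p <> place u -> p <> place v -> exists a b, [set a; b] = [set u; v] /\ edge_interior a b p.
Proof.
move=> uv [t [t_ge0 [t_le1 def_p]]] p_u p_v.
have t01 : 0 < t < 1.
  split; first case: (Rle_lt_or_eq_dec _ _ t_ge0) => // t0.
    by case: p_u; rewrite -def_p -t0 edge_curve0.
  case: (Rle_lt_or_eq_dec _ _ t_le1) => // t1.
  by case: p_v; rewrite -def_p t1 edge_curve1.
case/orP: uv => [uv|vu].
  by exists u, v; rewrite -def_p; split; last exact: edge_curve_interior.
exists v, u; rewrite setUC -def_p edge_curve_rev; split => //.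
by apply: edge_curve_interior => //; lra.
Qed.

Lemma arc_bump_bounds (a b : grid_vertex) s : INR a.1.2 < s < INR b.1.2 ->
  0 < (s - INR a.1.2) * (INR b.1.2 - s) < H.
Proof.
move=> [lt_as lt_sb]; have := leq_INR (leq_ord b.1.2); have := pos_INR a.1.2.
rewrite /row_height plus_INR mult_INR /= => a_ge0 b_le; split; first by nra.
have : (s - INR a.1.2) * (INR b.1.2 - s) <= (INR b.1.2 - INR a.1.2) * (INR b.1.2 - INR a.1.2).
  by nra.
by have : (INR b.1.2 - INR a.1.2) * (INR b.1.2 - INR a.1.2) <= INR n * INR n; nra.
Qed.

Lemma row_arcs_meet a b c d s s' : row_arc a b -> row_arc c d ->
  INR a.1.2 < s < INR b.1.2 -> INR c.1.2 < s' < INR d.1.2 ->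
  row_arc_point a b s = row_arc_point c d s' -> a = c /\ b = d.
Proof.
move=> ab cd s_ab s'_cd [eq_s eq_y]; subst s'.
have [bump_gt0 bump_lt] := arc_bump_bounds s_ab.
have [bump'_gt0 bump'_lt] := arc_bump_bounds s'_cd.
have eq_row := row_height_eq (conj (Rlt_le _ _ bump_gt0) bump_lt)
  (conj (Rlt_le _ _ bump'_gt0) bump'_lt) eq_y.
move: ab cd eq_y => /and4P [/eqP row_ab /eqP lev_a /eqP lev_b arc_ab].
move=> /and4P [/eqP row_cd /eqP lev_c /eqP lev_d arc_cd].
rewrite eq_row => /Rplus_eq_reg_l eq_bump.
have := dyadic_arc_laminar_scaled Rlt_0_1 arc_ab arc_cd; rewrite !Rmult_1_r => laminar.
have [/INR_eq col_ac /INR_eq col_bd] := nested_parabolas_eq s_ab s'_cd laminar eq_bump.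
by split; apply: grid_vertex_eq; rewrite // -?row_ab -?row_cd ?lev_a ?lev_b ?lev_c ?lev_d.
Qed.

Lemma root_arcs_meet a b c d y y' : root_arc a b -> root_arc c d ->
  INR a.1.1 * H < y < INR b.1.1 * H -> INR c.1.1 * H < y' < INR d.1.1 * H ->
  root_arc_point a b y = root_arc_point c d y' -> a = c /\ b = d.
Proof.
move=> ab cd y_ab y'_cd [eq_x eq_y]; subst y'.
move: ab cd => /and5P [/eqP col_a /eqP col_b /eqP lev_a /eqP lev_b arc_ab].
move=> /and5P [/eqP col_c /eqP col_d /eqP lev_c /eqP lev_d arc_cd].
have H_gt0 := row_height_gt0 m.
have eq_bump :
  (y - INR a.1.1 * H) * (INR b.1.1 * H - y) = (y - INR c.1.1 * H) * (INR d.1.1 * H - y) by lra.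
have [row_ac row_bd] :=
  nested_parabolas_eq y_ab y'_cd (dyadic_arc_laminar_scaled H_gt0 arc_ab arc_cd) eq_bump.
move: row_ac row_bd => /Rmult_eq_reg_r /(_ (Rgt_not_eq _ _ H_gt0)) /INR_eq row_ac.
move=> /Rmult_eq_reg_r /(_ (Rgt_not_eq _ _ H_gt0)) /INR_eq row_bd.
by split; apply: grid_vertex_eq; rewrite // ?col_a ?col_b ?col_c ?col_d ?lev_a ?lev_b ?lev_c ?lev_d.
Qed.

Definition level_up (c : grid_vertex) : grid_vertex := (c.1.1, c.1.2, inord c.2.+1).

(* The column step from [c] to [level_up c] is crossed only by the level-[c.2 + 1] row arc
   over column [c.1.2], whose end vertices form [crossing_arc c]. *)
Definition crossing_point (c : grid_vertex) : point :=
  (INR c.1.2, INR c.1.1 * H + INR (dyadic_height c.1.2 c.2.+1)).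

Definition crossing_arc (c : grid_vertex) : {set grid_vertex} :=
  let a := (2 ^ c.2.+1 * (c.1.2 %/ 2 ^ c.2.+1))%N in
  [set (c.1.1, inord a, ord0); (c.1.1, inord (a + 2 ^ c.2.+1), ord0)].

Lemma row_arc_column_step_meet a b c d s y : row_arc a b -> column_step c d ->
  INR a.1.2 < s < INR b.1.2 -> height c < y < height d ->
  row_arc_point a b s = (INR c.1.2, y) ->
  [/\ (c.2 < m)%N, d = level_up c, (INR c.1.2, y) = crossing_point c
    & [set a; b] = crossing_arc c].
Proof.
move=> ab cd s_ab y_cd [eq_s eq_y]; subst s.
have /and4P [/eqP row_ab /eqP lev_a /eqP lev_b arc_ab] := ab.
have lt_ac := INR_ltn (proj1 s_ab); have lt_cb := INR_ltn (proj2 s_ab).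
have [l [/andP [l_gt0 le_lm] height_l def_b def_a]] :=
  dyadic_height_arc arc_ab (introT andP (conj lt_ac lt_cb)).
have bump : (INR c.1.2 - INR a.1.2) * (INR b.1.2 - INR c.1.2) = INR (dyadic_height c.1.2 l).
  by rewrite height_l mult_INR !INR_subn // ltnW.
have height_gt0 : (0 < dyadic_height c.1.2 l)%N.
  by rewrite height_l muln_gt0 !subn_gt0 lt_ac lt_cb.
have [below above] := row_offset_around (introT andP (conj l_gt0 le_lm)) height_gt0.
have lt_l1 : (l.-1 < m.+1)%N by lia.
have lt_l : (l < m.+1)%N by lia.
pose L : grid_vertex := (a.1.1, c.1.2, inord l.-1).
pose U : grid_vertex := (a.1.1, c.1.2, inord l).
have LU : column_step L U by rewrite /column_step /code /= !inordK // eqxx /=; apply/eqP; lia.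
have y_LU : height L < y < height U by rewrite /height /= !inordK // -eq_y bump; lra.
(* The arc passes between levels l - 1 and l of column c.1.2, i.e. through the step from L to U. *)
have [-> ->] := column_steps_overlap_eq cd LU erefl y_cd y_LU.
rewrite /level_up /crossing_point /crossing_arc /= inordK // prednK //; split => //.
- by rewrite -eq_y bump.
- congr [set _; _]; apply: grid_vertex_eq;
    by rewrite /= ?inordK -?def_a -?def_b ?lev_a ?lev_b -?row_ab.
Qed.

Definition charged_crossing (E F : {set grid_vertex}) (p : point) : Prop :=
  exists2 c : grid_vertex, (c.2 < m)%N &
    [/\ F = [set c; level_up c], p = crossing_point c & E = crossing_arc c].

Lemma edge_interiors_meet a b c d p : edge_interior a b p -> edge_interior c d p ->
  [set a; b] <> [set c; d] ->
  charged_crossing [set a; b] [set c; d] p \/ charged_crossing [set c; d] [set a; b] p.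
Proof.
(* Root arcs run strictly left of column 0, all other edges at abscissae >= 0. *)
move=> [[ab [s s_ab ->]]|[ab [y y_ab ->]]|[ab [y y_ab ->]]]
       [[cd [s' s'_cd e]]|[cd [y' y'_cd e]]|[cd [y' y'_cd e]]] neq.
- by case: neq; have [-> ->] := row_arcs_meet ab cd s_ab s'_cd e.
- by case: e => e _; have := pos_INR a.1.2; nra.
- have [lt_m -> p_c ab_c] := row_arc_column_step_meet ab cd s_ab y'_cd e.
  by left; exists c; rewrite ?e.
- by case: e => e _; have := pos_INR c.1.2; nra.
- by case: neq; have [-> ->] := root_arcs_meet ab cd y_ab y'_cd e.
- by case: e => e _; have := pos_INR c.1.2; nra.
- have [lt_m -> p_a cd_a] := row_arc_column_step_meet cd ab s'_cd y_ab (esym e).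
  by right; exists a; rewrite -?e.
- by case: e => e _; have := pos_INR a.1.2; nra.
- case: e => /INR_eq eq_col eq_y; subst y'.
  by case: neq; have [-> ->] := column_steps_overlap_eq ab cd (val_inj eq_col) y_ab y'_cd.
Qed.

Lemma grid_crossing_charged p u v x y : crossing grid_adj place edge_curve p u v x y ->
  charged_crossing [set u; v] [set x; y] p \/ charged_crossing [set x; y] [set u; v] p.
Proof.
move=> [uv [xy [neq [on_uv [on_xy [p_u [p_v [p_x p_y]]]]]]]].
have [a [b [ab_uv ab_p]]] := on_edge_interior uv on_uv p_u p_v.
have [c [d [cd_xy cd_p]]] := on_edge_interior xy on_xy p_x p_y.
by rewrite -ab_uv -cd_xy in neq *; apply: edge_interiors_meet.
Qed.

Lemma edge_interior_not_place a b p w : edge_interior a b p -> p <> place w.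
Proof.
case=> [[ab [s s_ab ->]]|[ab [y y_ab ->]]|[ab [y y_ab ->]]] [eq_x eq_y].
- subst s; have [bump_gt0 bump_lt] := arc_bump_bounds s_ab.
  have lt_aw := INR_ltn (proj1 s_ab); have lt_wb := INR_ltn (proj2 s_ab).
  have bump : (INR w.1.2 - INR a.1.2) * (INR b.1.2 - INR w.1.2) =
              INR ((w.1.2 - a.1.2) * (b.1.2 - w.1.2)) by rewrite mult_INR !INR_subn // ltnW.
  have offset_bd :=
    conj (row_offset_ge0 m w.1.2 w.2) (row_offset_lt_row_height w.1.2 (leq_ord w.2)).
  have eq_row := row_height_eq (conj (Rlt_le _ _ bump_gt0) bump_lt) offset_bd eq_y.
  move: eq_y; rewrite /height eq_row bump => /Rplus_eq_reg_l eq_offset.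
  have lev_w := row_offset_eq_INR (leq_ord w.2) (esym eq_offset).
  by move: eq_offset bump_gt0; rewrite lev_w row_offset0 bump => <-; lra.
- by have := pos_INR w.1.2; nra.
- by apply: column_step_gap ab (esym (val_inj (INR_eq _ _ eq_x))) _; rewrite -eq_y.
Qed.

Lemma grid_embedding : embedding grid_adj place edge_curve.
Proof.
split; first exact: place_inj.
move=> u v uv; have [cont1 cont2] := edge_curve_continuous u v.
do 5?split => //; [exact: edge_curve0 | exact: edge_curve1 | exact: edge_curve_rev |].
move=> t w t01; case/orP: uv => [uv|vu].
  exact: edge_interior_not_place (edge_curve_interior uv t01).
by rewrite edge_curve_rev; apply: edge_interior_not_place (edge_curve_interior vu _); lra.
Qed.

Definition charge (E : {set grid_vertex}) : seq (point * {set grid_vertex}) :=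
  if [pick c : grid_vertex | (c.2 < m)%N && ([set c; level_up c] == E)] is Some c
  then [:: (crossing_point c, crossing_arc c)] else [::].

Lemma level_up_pair_inj (c c' : grid_vertex) : (c.2 < m)%N -> (c'.2 < m)%N ->
  [set c; level_up c] = [set c'; level_up c'] -> c = c'.
Proof.
move=> lt_c lt_c' eq_pairs.
have lev_up (k : grid_vertex) : (k.2 < m)%N -> (level_up k).2 = k.2.+1 :> nat.
  by move=> lt_k; rewrite /= inordK.
have : c \in [set c'; level_up c'] by rewrite -eq_pairs setU11.
rewrite !inE => /orP [/eqP // | /eqP c_up].
have lev_c : c.2 = c'.2.+1 :> nat by rewrite c_up lev_up.
have : level_up c \in [set c'; level_up c'] by rewrite -eq_pairs !inE eqxx orbT.
rewrite !inE => /orP [] /eqP /(congr1 (fun k : grid_vertex => nat_of_ord k.2)).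
all: by rewrite !lev_up //; lia.
Qed.

Lemma charge_level_up (c : grid_vertex) : (c.2 < m)%N ->
  charge [set c; level_up c] = [:: (crossing_point c, crossing_arc c)].
Proof.
move=> lt_c; rewrite /charge; case: pickP => [c' /andP [lt_c' /eqP eq_pairs]|none].
  by rewrite (level_up_pair_inj lt_c' lt_c eq_pairs).
by have := none c; rewrite lt_c eqxx.
Qed.

Lemma grid_gap_planar : gap_planar_embedding grid_adj 1 place edge_curve.
Proof.
exists charge; split => [E|p u v x y /grid_crossing_charged].
  by rewrite /charge; case: pickP.
by case=> -[c lt_c [-> -> ->]]; [right | left]; rewrite charge_level_up //; left.
Qed.

End Drawing.

Theorem theorem42 :
  exists c : R, Rlt R0 c /\
    forall N : nat, exists r : nat, (N <= r)%N /\ (1 <= r)%N /\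
      exists (T : finType) (e : rel T),
        simple_graph e /\ gap_planar e 1 /\ radius_le e r /\
        treewidth_ge e (Rpower (INR 2) (Rmult c (INR r))).
Proof.
exists (/ 4); split; first lra.
move=> N; pose m := N.+1; have m_gt0 : (0 < m)%N by [].
exists (4 * m)%N; split; first lia; split; first lia.
exists (grid_vertex m), (@grid_adj m).
split; first by split; [apply: grid_adj_sym | apply: grid_adj_irr].
split; first by exists (@place m), (@edge_curve m); 
  split; [apply: grid_embedding | apply: grid_gap_planar].
split.
  have [c c_reach] := grid_radius m_gt0; exists c => w.
  by apply: reach_le (c_reach w); rewrite leq_mul2r leqnSn orbT.
move=> I t B B_td.
have -> : / 4 * INR (4 * m) = INR m by rewrite mult_INR; simpl (INR 4); lra.
rewrite Rpower_pow -?INR_expn; last by apply: lt_0_INR; apply/ltP.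
exact/leq_INR/(grid_treewidth m_gt0 B_td).
Qed.
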